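(* Let $\varphi_0\in\mathbb{R}$ and let $v$ be a smooth function with $v(\varphi)>0$ and $v'(\varphi)>0$ for all $\varphi\ge\varphi_0$. Set $\mathfrak{v}(\varphi)=(\log\sqrt{v(\varphi)})'$ and $\mathfrak{R}_0=\{(\varphi,\mathfrak{h}):\varphi_0\le\varphi<\infty,\ 1\le\mathfrak{h}<\infty\}$. Let $\mathfrak{h}$ be the solution of $$\mathfrak{h}'=\sqrt{\mathfrak{h}^2-1}-\mathfrak{v}(\varphi)\,\mathfrak{h},\qquad \mathfrak{h}(\varphi_0)=\mathfrak{h}_0>1.$$ Then either (type A) $\mathfrak{h}$ leaves $\mathfrak{R}_0$ by reaching the boundary $\mathfrak{h}=1$ at some finite $\varphi_1>\varphi_0$, with slope $\mathfrak{h}'(\varphi_1)=-\mathfrak{v}(\varphi_1)<0$ there, or (type B) it exists and remains in $\mathfrak{R}_0$ for all $\varphi>\varphi_0$.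
   Context: The function $\mathfrak{h}=h/\sqrt{v}$ is the ''modified Hubble parameter'': $h$ solves $h'=\sqrt{h^2-v}$ on $\{h>\sqrt v\}$ if and only if $\mathfrak{h}=h/\sqrt v$ solves the displayed equation on $\{\mathfrak{h}>1\}$. *)

From Stdlib Require Import Reals.
From Coquelicot Require Import Coquelicot.
Open Scope R_scope.

Definition smooth (f : R -> R) : Prop :=
  forall (n : nat) (x : R), ex_derive_n f n x.

Definition frakv (v : R -> R) (phi : R) : R :=
  Derive (fun x => ln (sqrt (v x))) phi.

(* h is a solution of  h' = sqrt(h^2-1) - frakv v * h,  h(phi0) = h0,
   on the interval [phi0, T) (T possibly +oo), staying in the open region h > 1.
   At phi0 only right-continuity is required (derivative on the open part). *)
Definition is_sol (v : R -> R) (phi0 h0 : R) (h : R -> R) (T : Rbar) : Prop :=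
  Rbar_lt (Finite phi0) T /\
  h phi0 = h0 /\
  filterlim h (at_right phi0) (locally h0) /\
  (forall x, phi0 <= x -> Rbar_lt (Finite x) T -> 1 < h x) /\
  (forall x, phi0 < x -> Rbar_lt (Finite x) T ->
     is_derive h x (sqrt (h x ^ 2 - 1) - frakv v x * h x)).

Definition is_maximal_sol (v : R -> R) (phi0 h0 : R) (h : R -> R) (T : Rbar) : Prop :=
  is_sol v phi0 h0 h T /\
  forall (T' : Rbar) (g : R -> R),
    Rbar_lt T T' ->
    (forall x, phi0 <= x -> Rbar_lt (Finite x) T -> g x = h x) ->
    ~ is_sol v phi0 h0 g T'.

(* Since frakv > 0 and sqrt (h^2 - 1) < h, a solution satisfies h' < h, so h e^(-phi)
   decreases and h has a limit L >= 1 at the finite end T of its maximal interval.  Then h'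
   tends to sqrt (L^2 - 1) - frakv T * L, which by the mean value theorem is also the left
   slope of h at T.  If L > 1, Picard iteration for a truncated, globally Lipschitz version
   of the equation starts a solution at (T, L); glued to h it extends h beyond T, against
   maximality.  Hence L = 1 and the slope at T is -frakv T < 0. *)

From Stdlib Require Import Reals Lra Lia Classical.
From Coquelicot Require Import Coquelicot.
Open Scope R_scope.

Definition clamp (lo hi x : R) : R := Rmax lo (Rmin hi x).

Lemma clamp_in lo hi x : lo <= hi -> lo <= clamp lo hi x <= hi.
Proof. unfold clamp, Rmax, Rmin; intros; repeat destruct Rle_dec; lra. Qed.

Lemma clamp_id lo hi x : lo <= x <= hi -> clamp lo hi x = x.
Proof. unfold clamp, Rmax, Rmin; intros; repeat destruct Rle_dec; lra. Qed.

Lemma clamp_lipschitz lo hi x y :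
  lo <= hi -> Rabs (clamp lo hi x - clamp lo hi y) <= Rabs (x - y).
Proof.
  unfold clamp, Rmax, Rmin; intros.
  repeat destruct Rle_dec; unfold Rabs; repeat destruct Rcase_abs; lra.
Qed.

Lemma lipschitz_const_ge0 (f : R -> R) K :
  (forall y z, Rabs (f y - f z) <= K * Rabs (y - z)) -> 0 <= K.
Proof.
  intros Hf. specialize (Hf 1 0). rewrite Rminus_0_r, Rabs_R1, Rmult_1_r in Hf.
  pose proof (Rabs_pos (f 1 - f 0)). lra.
Qed.

Lemma lipschitz_continuous (f : R -> R) K x :
  (forall y z, Rabs (f y - f z) <= K * Rabs (y - z)) -> continuous f x.
Proof.
  intros Hf. apply filterlim_locally. intros eps.
  pose proof (lipschitz_const_ge0 f K Hf) as HK.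
  assert (Hd : 0 < eps / (K + 1)) by (apply Rdiv_lt_0_compat; [apply cond_pos | lra]).
  exists (mkposreal _ Hd). intros y Hy. change (Rabs (f y - f x) < eps).
  change (Rabs (y - x) < eps / (K + 1)) in Hy.
  apply Rle_lt_trans with ((K + 1) * Rabs (y - x)).
  - specialize (Hf y x). pose proof (Rabs_pos (y - x)). nra.
  - apply Rmult_lt_reg_r with (/ (K + 1)). apply Rinv_0_lt_compat; lra.
    replace ((K + 1) * Rabs (y - x) * / (K + 1)) with (Rabs (y - x)) by (field; lra).
    exact Hy.
Qed.

Lemma continuous_clamp lo hi x : lo <= hi -> continuous (clamp lo hi) x.
Proof.
  intros Hlh. apply lipschitz_continuous with 1. intros y z.
  rewrite Rmult_1_l. now apply clamp_lipschitz.
Qed.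

Lemma ex_RInt_continuous_R (f : R -> R) a b : (forall t, continuous f t) -> ex_RInt f a b.
Proof. intros Hc. apply (ex_RInt_continuous (V := R_CompleteNormedModule)). intros; apply Hc. Qed.

Lemma abs_RInt_le_const_abs (f : R -> R) a b M :
  (forall t, continuous f t) -> (forall t, Rmin a b <= t <= Rmax a b -> Rabs (f t) <= M) ->
  Rabs (RInt f a b) <= Rabs (b - a) * M.
Proof.
  intros Hc HM. apply (norm_RInt_le_const_abs f a b); [exact HM |].
  now apply (RInt_correct (V := R_CompleteNormedModule)), ex_RInt_continuous_R.
Qed.

Lemma continuous_lipschitz_family (F : R -> R -> R) K (phi : R -> R) t :
  (forall y, continuous (fun s => F s y) t) ->
  (forall s y z, Rabs (F s y - F s z) <= K * Rabs (y - z)) ->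
  continuous phi t -> continuous (fun s => F s (phi s)) t.
Proof.
  intros HFt HFy Hphi. apply filterlim_locally. intros eps.
  pose proof (lipschitz_const_ge0 (F t) K (HFy t)) as HK.
  assert (He2 : 0 < eps / 2) by (pose proof (cond_pos eps); lra).
  assert (HeK : 0 < eps / 2 / (K + 1)) by (apply Rdiv_lt_0_compat; lra).
  pose proof (proj1 (filterlim_locally _ _) (HFt (phi t)) (mkposreal _ He2)) as Ht.
  pose proof (proj1 (filterlim_locally _ _) Hphi (mkposreal _ HeK)) as Hp.
  generalize (filter_and _ _ Ht Hp). apply filter_imp. intros s [Hs1 Hs2].
  change (Rabs (F s (phi t) - F t (phi t)) < eps / 2) in Hs1.
  change (Rabs (phi s - phi t) < eps / 2 / (K + 1)) in Hs2.
  change (Rabs (F s (phi s) - F t (phi t)) < eps).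
  assert (Hlip : Rabs (F s (phi s) - F s (phi t)) <= eps / 2).
  { eapply Rle_trans; [apply HFy |].
    apply Rle_trans with ((K + 1) * (eps / 2 / (K + 1))); [| right; field; lra].
    pose proof (Rabs_pos (phi s - phi t)). nra. }
  replace (F s (phi s) - F t (phi t))
    with ((F s (phi s) - F s (phi t)) + (F s (phi t) - F t (phi t))) by ring.
  eapply Rle_lt_trans; [apply Rabs_triang | lra].
Qed.

Lemma is_lim_seq_scal_half_pow C : is_lim_seq (fun n => C * (/ 2) ^ n) 0.
Proof.
  replace (Finite 0) with (Rbar_mult C 0) by (simpl; f_equal; ring).
  apply is_lim_seq_scal_l, is_lim_seq_geom. rewrite Rabs_pos_eq; lra.
Qed.

Lemma le_0_of_le_geometric a C : (forall n, a <= C * (/ 2) ^ n) -> a <= 0.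
Proof.
  intros H.
  exact (is_lim_seq_le (fun _ => a) _ a 0 H (is_lim_seq_const a) (is_lim_seq_scal_half_pow C)).
Qed.

Section GeometricCauchy.
Variables (u : nat -> R) (C : R).
Hypothesis u_step : forall n, Rabs (u (S n) - u n) <= C * (/ 2) ^ n.

Lemma geometric_tail n m : Rabs (u (n + m) - u n) <= 2 * C * ((/ 2) ^ n - (/ 2) ^ (n + m)).
Proof.
  induction m as [| m IH].
  - rewrite Nat.add_0_r, !Rminus_diag, Rabs_R0. lra.
  - rewrite Nat.add_succ_r.
    replace (u (S (n + m)) - u n) with ((u (S (n + m)) - u (n + m)) + (u (n + m) - u n)) by ring.
    eapply Rle_trans; [apply Rabs_triang |].
    pose proof (u_step (n + m)). simpl ((/ 2) ^ S (n + m)). lra.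
Qed.

Lemma geometric_tail_le n m : (n <= m)%nat -> Rabs (u m - u n) <= 2 * C * (/ 2) ^ n.
Proof.
  intros Hnm. replace m with (n + (m - n))%nat by lia.
  pose proof (geometric_tail n (m - n)) as Ht.
  assert (HC : 0 <= C).
  { pose proof (u_step 0). pose proof (Rabs_pos (u 1%nat - u 0%nat)). simpl in *. lra. }
  pose proof (pow_le (/ 2) (n + (m - n)) ltac:(lra)). nra.
Qed.

Lemma is_lim_seq_geometric_cauchy : is_lim_seq u (real (Lim_seq u)).
Proof.
  assert (Hex : ex_finite_lim_seq u).
  { apply ex_lim_seq_cauchy_corr. intros eps.
    assert (He : 0 < eps / 2) by (pose proof (cond_pos eps); lra).
    destruct (proj2 (is_lim_seq_spec _ _) (is_lim_seq_scal_half_pow (2 * C)) (mkposreal _ He))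
      as [N HN].
    exists N. intros n m Hn Hm.
    pose proof (geometric_tail_le N n Hn). pose proof (geometric_tail_le N m Hm).
    specialize (HN N (le_n N)). simpl in HN. rewrite Rminus_0_r in HN.
    replace (u n - u m) with ((u n - u N) - (u m - u N)) by ring.
    eapply Rle_lt_trans; [apply Rabs_triang |]. rewrite Rabs_Ropp.
    pose proof (Rle_abs (2 * C * (/ 2) ^ N)). lra. }
  destruct Hex as [l Hl]. now rewrite (is_lim_seq_unique _ _ Hl).
Qed.

Lemma geometric_cauchy_error n : Rabs (real (Lim_seq u) - u n) <= 2 * C * (/ 2) ^ n.
Proof.
  set (l := real (Lim_seq u)).
  assert (Hl : is_lim_seq (fun m => Rabs (u (m + n)%nat - u n)) (Rabs (l - u n))).
  { apply (is_lim_seq_abs _ (l - u n)).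
    apply (is_lim_seq_minus' _ (fun _ => u n)); [| apply is_lim_seq_const].
    now apply is_lim_seq_incr_n, is_lim_seq_geometric_cauchy. }
  refine (is_lim_seq_le _ (fun _ => 2 * C * (/ 2) ^ n) _ _ _ Hl (is_lim_seq_const _)).
  intros m. apply geometric_tail_le. lia.
Qed.
End GeometricCauchy.

Section Picard.
Variables (F : R -> R -> R) (c y0 M K d : R).
Hypothesis F_continuous : forall y t, continuous (fun s => F s y) t.
Hypothesis F_bounded : forall t y, Rabs (F t y) <= M.
Hypothesis F_lipschitz : forall t y z, Rabs (F t y - F t z) <= K * Rabs (y - z).
Hypothesis d_pos : 0 < d.
Hypothesis Kd_le_half : K * d <= / 2.

(* Integrating only up to the clamped endpoint makes every iterate globally M-Lipschitz and
   the contraction estimates uniform in x. *)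
Let I := clamp (c - d) (c + d).

Let M_ge0 : 0 <= M.
Proof. apply Rle_trans with (Rabs (F 0 0)); [apply Rabs_pos | apply F_bounded]. Qed.

Let K_ge0 : 0 <= K.
Proof. exact (lipschitz_const_ge0 (F 0) K (F_lipschitz 0)). Qed.

Let I_near_c x : Rabs (I x - c) <= d.
Proof. apply Rabs_le_between', clamp_in. lra. Qed.

Let integrand_continuous (phi : R -> R) t :
  (forall s, continuous phi s) -> continuous (fun s => F s (phi s)) t.
Proof. intros Hphi. now apply continuous_lipschitz_family with K. Qed.

Let RInt_lipschitz_bound (phi psi : R -> R) x B :
  (forall s, continuous phi s) -> (forall s, continuous psi s) ->
  (forall s, Rabs (phi s - psi s) <= B) ->
  Rabs (RInt (fun t => F t (phi t)) c (I x) - RInt (fun t => F t (psi t)) c (I x)) <= d * (K * B).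
Proof.
  intros Hphi Hpsi HB.
  rewrite <- (RInt_minus (V := R_CompleteNormedModule));
    try (apply ex_RInt_continuous_R; intros; now apply integrand_continuous).
  eapply Rle_trans.
  - apply (abs_RInt_le_const_abs (fun t => F t (phi t) - F t (psi t))).
    + intros t. apply (continuous_minus (fun t => F t (phi t)) (fun t => F t (psi t)));
        now apply integrand_continuous.
    + intros t _. eapply Rle_trans; [apply F_lipschitz |].
      apply Rmult_le_compat_l; [exact K_ge0 | apply HB].
  - apply Rmult_le_compat_r; [| apply I_near_c].
    apply Rmult_le_pos; [exact K_ge0 |]. eapply Rle_trans; [apply Rabs_pos | apply (HB 0)].
Qed.

Fixpoint picard_iter (n : nat) : R -> R :=
  match n with
  | O => fun _ => y0
  | S n => fun x => y0 + RInt (fun t => F t (picard_iter n t)) c (I x)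
  end.

Let picard_iter_S n x :
  picard_iter (S n) x = y0 + RInt (fun t => F t (picard_iter n t)) c (I x).
Proof. reflexivity. Qed.

Lemma picard_iter_lipschitz n x y :
  Rabs (picard_iter n x - picard_iter n y) <= M * Rabs (x - y).
Proof.
  revert x y. induction n as [| n IH]; intros x y; simpl.
  - rewrite Rminus_diag, Rabs_R0. apply Rmult_le_pos; [exact M_ge0 | apply Rabs_pos].
  - set (f := fun t => F t (picard_iter n t)).
    assert (Hf : forall t, continuous f t).
    { intros t. apply integrand_continuous. intros s. now apply lipschitz_continuous with M. }
    assert (Hch : RInt f c (I y) + RInt f (I y) (I x) = RInt f c (I x))
      by (apply (RInt_Chasles f); apply ex_RInt_continuous_R; exact Hf).
    rewrite <- Hch, Rminus_plus_l_l, Rplus_minus_l.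
    eapply Rle_trans; [apply abs_RInt_le_const_abs; [exact Hf | intros; apply F_bounded] |].
    rewrite Rmult_comm. apply Rmult_le_compat_l; [exact M_ge0 |].
    apply clamp_lipschitz. lra.
Qed.

Let picard_iter_continuous n t : continuous (picard_iter n) t.
Proof. apply lipschitz_continuous with M. apply picard_iter_lipschitz. Qed.

Lemma picard_iter_step n x :
  Rabs (picard_iter (S n) x - picard_iter n x) <= M * d * (/ 2) ^ n.
Proof.
  revert x. induction n as [| n IH]; intros x.
  - simpl. rewrite Rplus_minus_l.
    eapply Rle_trans.
    + apply abs_RInt_le_const_abs; [intros; apply F_continuous | intros; apply F_bounded].
    + rewrite Rmult_1_r, Rmult_comm. apply Rmult_le_compat_l; [exact M_ge0 | apply I_near_c].
  - rewrite (picard_iter_S (S n) x), (picard_iter_S n x), Rminus_plus_l_l.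
    eapply Rle_trans; [apply RInt_lipschitz_bound; auto |].
    pose proof (pow_le (/ 2) n ltac:(lra)).
    assert (0 <= M * d * (/ 2) ^ n) by (apply Rmult_le_pos; [nra | lra]).
    simpl. nra.
Qed.

Definition picard_limit x := real (Lim_seq (fun n => picard_iter n x)).

Lemma picard_limit_error n x :
  Rabs (picard_limit x - picard_iter n x) <= 2 * (M * d) * (/ 2) ^ n.
Proof.
  apply (geometric_cauchy_error (fun m => picard_iter m x)). intros m. apply picard_iter_step.
Qed.

Lemma picard_limit_lipschitz x y :
  Rabs (picard_limit x - picard_limit y) <= M * Rabs (x - y).
Proof.
  assert (Hlim : forall z, is_lim_seq (fun n => picard_iter n z) (picard_limit z)).
  { intros z. apply (is_lim_seq_geometric_cauchy (fun n => picard_iter n z) (M * d)).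
    intros n. apply picard_iter_step. }
  refine (is_lim_seq_le (fun n => Rabs (picard_iter n x - picard_iter n y)) _
            (Rabs (picard_limit x - picard_limit y)) _ _ _ (is_lim_seq_const _)).
  - intros n. apply picard_iter_lipschitz.
  - apply (is_lim_seq_abs _ (picard_limit x - picard_limit y)).
    now apply is_lim_seq_minus'.
Qed.

Let picard_limit_continuous t : continuous picard_limit t.
Proof. apply lipschitz_continuous with M. apply picard_limit_lipschitz. Qed.

Lemma picard_limit_fixpoint x :
  picard_limit x = y0 + RInt (fun t => F t (picard_limit t)) c (I x).
Proof.
  apply Rminus_diag_uniq, Rabs_eq_0, Rle_antisym; [| apply Rabs_pos].
  apply (le_0_of_le_geometric _ (2 * (M * d))). intros n.
  replace (picard_limit x - (y0 + RInt (fun t => F t (picard_limit t)) c (I x)))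
    with ((picard_limit x - picard_iter (S n) x)
          + (RInt (fun t => F t (picard_iter n t)) c (I x)
             - RInt (fun t => F t (picard_limit t)) c (I x))) by (simpl; ring).
  set (e := M * d * (/ 2) ^ n).
  assert (He : 0 <= e).
  { apply Rmult_le_pos; [apply Rmult_le_pos; [exact M_ge0 | lra] | apply pow_le; lra]. }
  assert (H1 : Rabs (picard_limit x - picard_iter (S n) x) <= e).
  { replace e with (2 * (M * d) * (/ 2) ^ S n) by (unfold e; simpl; field).
    apply picard_limit_error. }
  assert (H2 : Rabs (RInt (fun t => F t (picard_iter n t)) c (I x)
                     - RInt (fun t => F t (picard_limit t)) c (I x)) <= e).
  { eapply Rle_trans;
      [apply (RInt_lipschitz_bound _ _ x (2 * e) (picard_iter_continuous n)
                picard_limit_continuous) |].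
    - intros s. rewrite <- Rabs_Ropp, Ropp_minus_distr.
      replace (2 * e) with (2 * (M * d) * (/ 2) ^ n) by (unfold e; ring).
      apply picard_limit_error.
    - replace (d * (K * (2 * e))) with (K * d * (2 * e)) by ring.
      apply Rle_trans with (/ 2 * (2 * e)); [apply Rmult_le_compat_r |]; lra. }
  replace (2 * (M * d) * (/ 2) ^ n) with (2 * e) by (unfold e; ring).
  eapply Rle_trans; [apply Rabs_triang | lra].
Qed.

Lemma picard_limit_init : picard_limit c = y0.
Proof.
  rewrite picard_limit_fixpoint.
  replace (I c) with c by (symmetry; apply clamp_id; lra).
  rewrite RInt_point. apply Rplus_0_r.
Qed.

Lemma picard_limit_derive x :
  Rabs (x - c) < d -> is_derive picard_limit x (F x (picard_limit x)).
Proof.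
  intros Hx. set (f := fun t => F t (picard_limit t)).
  assert (Hint : is_derive (fun y => y0 + RInt f c y) x (f x)).
  { replace (f x) with (0 + f x) by ring.
    apply (is_derive_plus (fun _ => y0));
      [apply (is_derive_const (K := R_AbsRing) (V := R_NormedModule)) |].
    apply (is_derive_RInt (V := R_CompleteNormedModule) f (RInt f c) c x).
    - apply filter_forall. intros b. apply (RInt_correct (V := R_CompleteNormedModule)).
      apply ex_RInt_continuous_R. intros; now apply integrand_continuous.
    - now apply integrand_continuous. }
  apply is_derive_ext_loc with (2 := Hint).
  assert (Hr : 0 < d - Rabs (x - c)) by lra.
  exists (mkposreal _ Hr). intros y Hy. change (Rabs (y - x) < d - Rabs (x - c)) in Hy.
  assert (Hyc : Rabs (y - c) <= d).
  { replace (y - c) with ((y - x) + (x - c)) by ring. eapply Rle_trans; [apply Rabs_triang | lra]. }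
  rewrite (picard_limit_fixpoint y). unfold I.
  now rewrite (clamp_id _ _ y) by now apply Rabs_le_between'.
Qed.

End Picard.

Lemma picard_local_existence (F : R -> R -> R) c y0 M K d :
  (forall y t, continuous (fun s => F s y) t) ->
  (forall t y, Rabs (F t y) <= M) ->
  (forall t y z, Rabs (F t y - F t z) <= K * Rabs (y - z)) ->
  0 < d -> K * d <= / 2 ->
  exists g : R -> R, g c = y0 /\
    (forall x, Rabs (x - c) < d -> is_derive g x (F x (g x))) /\
    (forall x, Rabs (g x - y0) <= M * Rabs (x - c)).
Proof.
  intros HFc HFb HFl Hd HKd. exists (picard_limit F c y0 d).
  split; [| split].
  - now apply picard_limit_init with M K.
  - intros x Hx. now apply picard_limit_derive with M K.
  - intros x. rewrite <- (picard_limit_init F c y0 M K d) at 2 by assumption.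
    now apply picard_limit_lipschitz with K.
Qed.

Section FilterlimR.
Context {T : Type} {F : (T -> Prop) -> Prop} {FF : Filter F}.

Lemma filterlim_Rplus (f g : T -> R) lf lg :
  filterlim f F (locally lf) -> filterlim g F (locally lg) ->
  filterlim (fun x => f x + g x) F (locally (lf + lg)).
Proof.
  intros Hf Hg.
  exact (filterlim_comp_2 f g Rplus Hf Hg
           (filterlim_plus (K := R_AbsRing) (V := R_NormedModule) lf lg)).
Qed.

Lemma filterlim_Rmult (f g : T -> R) lf lg :
  filterlim f F (locally lf) -> filterlim g F (locally lg) ->
  filterlim (fun x => f x * g x) F (locally (lf * lg)).
Proof.
  intros Hf Hg. exact (filterlim_comp_2 f g Rmult Hf Hg (filterlim_mult (K := R_AbsRing) lf lg)).
Qed.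

Lemma filterlim_Rminus (f g : T -> R) lf lg :
  filterlim f F (locally lf) -> filterlim g F (locally lg) ->
  filterlim (fun x => f x - g x) F (locally (lf - lg)).
Proof.
  intros Hf Hg. apply filterlim_Rplus; [exact Hf |].
  exact (filterlim_comp _ _ _ g Ropp F (locally lg) _ Hg
           (filterlim_opp (K := R_AbsRing) (V := R_NormedModule) lg)).
Qed.

End FilterlimR.

Lemma continuous_at_left (f : R -> R) a :
  continuous f a -> filterlim f (at_left a) (locally (f a)).
Proof.
  intros Hf. apply filterlim_filter_le_1 with (2 := Hf).
  intros P [e He]. exists e. intros y Hy _. now apply He.
Qed.

Lemma nonincreasing_left_limit (w : R -> R) a b B : a < b ->
  (forall x y, a < x -> x <= y -> y < b -> w y <= w x) ->
  (forall x, a < x < b -> B <= w x) ->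
  exists l, filterlim w (at_left b) (locally l).
Proof.
  intros Hab Hdec HB.
  set (E := fun y => exists x, a < x < b /\ y = - w x).
  assert (HEub : bound E) by (exists (- B); intros y [x [Hx ->]]; pose proof (HB x Hx); lra).
  assert (HEne : exists y, E y)
    by (exists (- w ((a + b) / 2)); exists ((a + b) / 2); split; [lra | easy]).
  destruct (completeness E HEub HEne) as [m [Hub Hlub]].
  exists (- m). apply filterlim_locally. intros eps.
  assert (Hx1 : exists x1, a < x1 < b /\ m - eps < - w x1).
  { apply NNPP. intros Hn.
    assert (m <= m - eps); [| pose proof (cond_pos eps); lra].
    apply Hlub. intros y [x [Hx ->]]. apply Rnot_lt_le. intros Hc. apply Hn. now exists x. }
  destruct Hx1 as [x1 [Hx1 Hw1]].
  assert (Hr : 0 < b - x1) by lra.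
  exists (mkposreal _ Hr). intros y Hy Hyb. change (Rabs (y - b) < b - x1) in Hy.
  change (Rabs (w y - - m) < eps).
  assert (x1 < y) by (unfold Rabs in Hy; destruct Rcase_abs; lra).
  assert (w y <= w x1) by (apply Hdec; lra).
  assert (- w y <= m) by (apply Hub; exists y; split; [lra | easy]).
  unfold Rabs; destruct Rcase_abs; lra.
Qed.

Lemma mean_value_bound (f df : R -> R) l e x y : x <= y ->
  (forall t, x <= t <= y -> is_derive f t (df t)) ->
  (forall t, x <= t <= y -> Rabs (df t - l) <= e) ->
  Rabs (f y - f x - l * (y - x)) <= e * (y - x).
Proof.
  intros Hxy Hder Hdf.
  destruct (MVT_gen f x y df) as [xi [Hxi Hmv]];
    rewrite ?Rmin_left, ?Rmax_right in * by lra.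
  - intros t Ht. apply Hder. lra.
  - intros t Ht. apply continuity_pt_filterlim.
    apply (ex_derive_continuous (K := R_AbsRing) (V := R_NormedModule)).
    exists (df t). now apply Hder.
  - rewrite Hmv. replace (df xi * (y - x) - l * (y - x)) with ((df xi - l) * (y - x)) by ring.
    rewrite Rabs_mult, (Rabs_pos_eq (y - x)) by lra.
    apply Rmult_le_compat_r; [lra | apply Hdf; lra].
Qed.

Lemma at_left_between a b : a < b -> at_left b (fun x => a < x < b).
Proof.
  intros Hab. assert (Hba : 0 < b - a) by lra.
  exists (mkposreal _ Hba). intros y Hy Hyb. change (Rabs (y - b) < b - a) in Hy.
  unfold Rabs in Hy; destruct Rcase_abs; lra.
Qed.

Lemma increment_bound_at_left (f : R -> R) a L l e x : x < a -> 0 <= e ->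
  filterlim f (at_left a) (locally L) ->
  (forall y, x < y < a -> Rabs (f y - f x - l * (y - x)) <= e * (y - x)) ->
  Rabs (L - f x - l * (a - x)) <= e * (a - x).
Proof.
  intros Hxa He Hf Hinc.
  apply (filterlim_le (F := at_left a)
           (fun y => Rabs (f y - f x - l * (y - x))) (fun _ => e * (a - x))
           (Rabs (L - f x - l * (a - x))) (e * (a - x))).
  - apply filter_imp with (2 := at_left_between _ _ Hxa). intros y Hy.
    eapply Rle_trans; [apply Hinc, Hy |]. apply Rmult_le_compat_l; lra.
  - apply (filterlim_comp _ _ _ _ Rabs _ (locally (L - f x - l * (a - x))));
      [| apply continuous_Rabs].
    apply filterlim_Rminus; [apply filterlim_Rminus; [exact Hf | apply filterlim_const] |].
    apply (continuous_at_left (fun y => l * (y - x))).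
    apply (ex_derive_continuous (K := R_AbsRing) (V := R_NormedModule)). auto_derive. easy.
  - apply filterlim_const.
Qed.

Lemma filterlim_slope_at_left (f df : R -> R) a L l :
  at_left a (fun x => is_derive f x (df x)) ->
  filterlim f (at_left a) (locally L) -> filterlim df (at_left a) (locally l) ->
  filterlim (fun x => (f x - L) / (x - a)) (at_left a) (locally l).
Proof.
  intros [d1 Hd1] Hf Hdf. apply filterlim_locally. intros eps.
  assert (He : 0 < eps / 2) by (pose proof (cond_pos eps); lra).
  destruct (proj1 (filterlim_locally _ _) Hdf (mkposreal _ He)) as [d2 Hd2].
  exists (mkposreal _ (Rmin_pos _ _ (cond_pos d1) (cond_pos d2))).
  intros x Hx Hxa. change (Rabs (x - a) < Rmin d1 d2) in Hx.
  change (Rabs ((f x - L) / (x - a) - l) < eps).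
  assert (Hnear : forall t, x <= t < a -> ball a d1 t /\ ball a d2 t).
  { intros t Ht. pose proof (Rmin_l d1 d2). pose proof (Rmin_r d1 d2).
    split; [change (Rabs (t - a) < d1) | change (Rabs (t - a) < d2)];
      unfold Rabs in *; do 2 destruct Rcase_abs; lra. }
  assert (Hmv : forall y, x < y < a -> Rabs (f y - f x - l * (y - x)) <= eps / 2 * (y - x)).
  { intros y Hy. apply (mean_value_bound f df); [lra | |]; intros t Ht.
    - apply Hd1; [apply Hnear |]; lra.
    - apply Rlt_le, Hd2; [apply Hnear |]; lra. }
  assert (Hlim : Rabs (L - f x - l * (a - x)) <= eps / 2 * (a - x))
    by (apply (increment_bound_at_left f); auto; lra).
  replace ((f x - L) / (x - a) - l) with ((L - f x - l * (a - x)) / (a - x)) by (field; lra).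
  rewrite Rabs_div, (Rabs_pos_eq (a - x)) by lra.
  apply Rle_lt_trans with (eps / 2); [| lra].
  apply Rmult_le_reg_r with (a - x); [lra |].
  unfold Rdiv at 1. rewrite Rmult_assoc, Rinv_l by lra. lra.
Qed.

Lemma is_derive_glue (f g : R -> R) a l :
  filterlim (fun x => (f x - g a) / (x - a)) (at_left a) (locally l) ->
  is_derive g a l ->
  is_derive (fun x => if Rlt_dec x a then f x else g x) a l.
Proof.
  intros Hf Hg. apply is_derive_Reals. apply is_derive_Reals in Hg.
  intros eps Heps.
  destruct (Hg eps Heps) as [d2 Hd2].
  destruct (proj1 (filterlim_locally _ _) Hf (mkposreal _ Heps)) as [d1 Hd1].
  exists (mkposreal _ (Rmin_pos _ _ (cond_pos d1) (cond_pos d2))).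
  intros dx Hdx0 Hdx. simpl in Hdx.
  pose proof (Rmin_l d1 d2). pose proof (Rmin_r d1 d2).
  destruct (Rlt_dec a a) as [Haa | _]; [lra |].
  destruct (Rlt_dec (a + dx) a) as [Hlt | Hge].
  - assert (Hball : ball a d1 (a + dx)).
    { change (Rabs (a + dx - a) < d1). replace (a + dx - a) with dx by ring. lra. }
    pose proof (Hd1 (a + dx) Hball Hlt) as Hslope.
    change (Rabs ((f (a + dx) - g a) / (a + dx - a) - l) < eps) in Hslope.
    now replace (a + dx - a) with dx in Hslope by ring.
  - apply Hd2; [exact Hdx0 | lra].
Qed.

Lemma small_radius_exists M K r dl : 0 <= M -> 0 <= K -> 0 < r -> 0 < dl ->
  exists d, 0 < d /\ d <= dl /\ M * d <= r /\ K * d <= / 2.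
Proof.
  intros HM HK Hr Hdl. set (d := Rmin dl (Rmin (r / (M + 1)) (/ (2 * K + 2)))).
  assert (Hd1 : d <= r / (M + 1)) by (eapply Rle_trans; [apply Rmin_r | apply Rmin_l]).
  assert (Hd2 : d <= / (2 * K + 2)) by (eapply Rle_trans; [apply Rmin_r | apply Rmin_r]).
  exists d. repeat split.
  - apply Rmin_pos; [lra | apply Rmin_pos].
    + apply Rdiv_lt_0_compat; lra.
    + apply Rinv_0_lt_compat; lra.
  - apply Rmin_l.
  - apply Rle_trans with (M * (r / (M + 1))); [now apply Rmult_le_compat_l |].
    apply Rmult_le_reg_r with (M + 1); [lra |]. field_simplify; nra.
  - apply Rle_trans with (K * / (2 * K + 2)); [now apply Rmult_le_compat_l |].
    apply Rmult_le_reg_r with (2 * K + 2); [lra |]. field_simplify; lra.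
Qed.

Lemma sqrt_sq1_lt y : 1 <= y -> sqrt (y ^ 2 - 1) < y.
Proof.
  intros Hy. rewrite <- (sqrt_pow2 y) at 2 by lra.
  apply sqrt_lt_1_alt. split; nra.
Qed.

Lemma continuous_sqrt_sq1 y : continuous (fun z => sqrt (z ^ 2 - 1)) y.
Proof.
  apply continuous_sqrt_comp.
  apply (ex_derive_continuous (K := R_AbsRing) (V := R_NormedModule)). auto_derive. easy.
Qed.

(* y / sqrt (y^2 - 1) decreases on (1, +oo), so its value at lo bounds the slope. *)
Lemma sqrt_sq1_lipschitz lo y z : 1 < lo -> lo <= y -> lo <= z ->
  Rabs (sqrt (y ^ 2 - 1) - sqrt (z ^ 2 - 1)) <= lo / sqrt (lo ^ 2 - 1) * Rabs (y - z).
Proof.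
  intros Hlo Hy Hz.
  set (s := sqrt (lo ^ 2 - 1)). set (p := sqrt (y ^ 2 - 1)). set (q := sqrt (z ^ 2 - 1)).
  assert (Hs : 0 < s) by (apply sqrt_lt_R0; nra).
  assert (Hs2 : s * s = lo ^ 2 - 1) by (apply sqrt_sqrt; nra).
  assert (Hp2 : p * p = y ^ 2 - 1) by (apply sqrt_sqrt; nra).
  assert (Hq2 : q * q = z ^ 2 - 1) by (apply sqrt_sqrt; nra).
  assert (Hsp : s <= p) by (apply sqrt_le_1_alt; nra).
  assert (Hsq : s <= q) by (apply sqrt_le_1_alt; nra).
  assert (Hyp : y * s <= lo * p) by (apply Rsqr_incr_0_var; unfold Rsqr; nra).
  assert (Hzq : z * s <= lo * q) by (apply Rsqr_incr_0_var; unfold Rsqr; nra).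
  assert (Hprod : Rabs (p - q) * (p + q) = Rabs (y - z) * (y + z)).
  { rewrite <- (Rabs_pos_eq (p + q)), <- (Rabs_pos_eq (y + z)), <- !Rabs_mult by lra.
    f_equal. nra. }
  apply Rmult_le_reg_r with ((p + q) * s); [nra |].
  replace (lo / s * Rabs (y - z) * ((p + q) * s)) with (Rabs (y - z) * (lo * (p + q)))
    by (field; lra).
  rewrite <- Rmult_assoc, Hprod, Rmult_assoc.
  apply Rmult_le_compat_l; [apply Rabs_pos | lra].
Qed.

Lemma frakv_eq v x : ex_derive v x -> 0 < v x -> frakv v x = Derive v x / (2 * v x).
Proof.
  intros Hd Hv. unfold frakv. apply is_derive_unique.
  assert (Hs : 0 < sqrt (v x)) by (now apply sqrt_lt_R0).
  auto_derive; [repeat split; auto |].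
  change (Derive (fun y => v y) x) with (Derive v x).
  assert (Hsq : v x = sqrt (v x) * sqrt (v x)) by (symmetry; apply sqrt_sqrt; lra).
  set (s := sqrt (v x)) in *. rewrite Hsq. field. lra.
Qed.

Definition hubble_field (v : R -> R) (x y : R) : R := sqrt (y ^ 2 - 1) - frakv v x * y.

Section ModifiedHubble.
Variables (v : R -> R) (phi0 : R).
Hypothesis v_smooth : smooth v.
Hypothesis v_pos : forall phi, phi0 <= phi -> 0 < v phi /\ 0 < Derive v phi.

Lemma frakv_pos x : phi0 <= x -> 0 < frakv v x.
Proof.
  intros Hx. destruct (v_pos x Hx).
  rewrite frakv_eq by (try apply (v_smooth 1%nat); lra).
  apply Rdiv_lt_0_compat; lra.
Qed.

Lemma frakv_continuous x : phi0 < x -> continuous (frakv v) x.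
Proof.
  intros Hx. apply continuous_ext_loc with (fun y => Derive v y / (2 * v y)).
  - apply filter_imp with (2 := open_gt phi0 x Hx). intros y Hy.
    symmetry. apply frakv_eq; [apply (v_smooth 1%nat) | apply v_pos; lra].
  - apply (continuous_mult (K := R_AbsRing) (Derive v) (fun y => / (2 * v y))).
    + apply (ex_derive_continuous (K := R_AbsRing) (V := R_NormedModule)), (v_smooth 2%nat).
    + apply continuous_Rinv_comp; [| destruct (v_pos x); lra].
      apply (continuous_scal_r (K := R_AbsRing) 2 v).
      apply (ex_derive_continuous (K := R_AbsRing) (V := R_NormedModule)), (v_smooth 1%nat).
Qed.

Section Truncation.
Variables lo hi al be : R.
Hypotheses (lo_gt1 : 1 < lo) (lo_le_hi : lo <= hi) (phi0_lt_al : phi0 < al) (al_le_be : al <= be).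

Definition truncated_field x y := hubble_field v (clamp al be x) (clamp lo hi y).

Lemma truncated_field_eq x y :
  al <= x <= be -> lo <= y <= hi -> truncated_field x y = hubble_field v x y.
Proof. intros Hx Hy. unfold truncated_field. now rewrite !clamp_id. Qed.

Lemma truncated_field_continuous y t : continuous (fun s => truncated_field s y) t.
Proof.
  unfold truncated_field, hubble_field.
  apply (continuous_minus (fun _ => sqrt (clamp lo hi y ^ 2 - 1))); [apply continuous_const |].
  apply (continuous_mult (K := R_AbsRing) (fun s => frakv v (clamp al be s)));
    [| apply continuous_const].
  apply continuous_comp; [now apply continuous_clamp |].
  apply frakv_continuous. pose proof (clamp_in al be t al_le_be). lra.
Qed.

Let frakv_clamp_bounded : exists K1, forall x, Rabs (frakv v (clamp al be x)) <= K1.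
Proof.
  destruct (continuity_ab_maj (fun x => Rabs (frakv v x)) al be al_le_be) as [xm [Hxm _]].
  { intros x Hx. apply continuity_pt_filterlim, continuous_Rabs_comp, frakv_continuous. lra. }
  exists (Rabs (frakv v xm)). intros x. now apply Hxm, clamp_in.
Qed.

Lemma truncated_field_bounded : exists M, forall x y, Rabs (truncated_field x y) <= M.
Proof.
  destruct frakv_clamp_bounded as [K1 HK1].
  exists (hi + K1 * hi). intros x y. unfold truncated_field, hubble_field.
  pose proof (clamp_in lo hi y lo_le_hi). pose proof (HK1 x).
  pose proof (Rabs_pos (frakv v (clamp al be x))).
  pose proof (sqrt_pos (clamp lo hi y ^ 2 - 1)).
  pose proof (sqrt_sq1_lt (clamp lo hi y) ltac:(lra)).
  eapply Rle_trans; [apply Rabs_triang |].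
  rewrite Rabs_Ropp, Rabs_mult, Rabs_pos_eq, (Rabs_pos_eq (clamp lo hi y)) by lra.
  apply Rplus_le_compat; [lra | apply Rmult_le_compat; lra].
Qed.

Lemma truncated_field_lipschitz : exists K, forall x y z,
  Rabs (truncated_field x y - truncated_field x z) <= K * Rabs (y - z).
Proof.
  destruct frakv_clamp_bounded as [K1 HK1].
  exists (lo / sqrt (lo ^ 2 - 1) + K1). intros x y z. unfold truncated_field, hubble_field.
  pose proof (clamp_in lo hi y lo_le_hi). pose proof (clamp_in lo hi z lo_le_hi).
  set (y' := clamp lo hi y) in *. set (z' := clamp lo hi z) in *.
  set (k := frakv v (clamp al be x)).
  replace (sqrt (y' ^ 2 - 1) - k * y' - (sqrt (z' ^ 2 - 1) - k * z'))
    with ((sqrt (y' ^ 2 - 1) - sqrt (z' ^ 2 - 1)) - k * (y' - z')) by ring.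
  eapply Rle_trans; [apply Rabs_triang |].
  rewrite Rabs_Ropp, Rabs_mult, Rmult_plus_distr_r.
  assert (Hyz : Rabs (y' - z') <= Rabs (y - z)) by (apply clamp_lipschitz; lra).
  apply Rplus_le_compat.
  - eapply Rle_trans; [apply (sqrt_sq1_lipschitz lo); lra |].
    apply Rmult_le_compat_l; [| exact Hyz].
    apply Rlt_le, Rdiv_lt_0_compat; [lra | apply sqrt_lt_R0; nra].
  - apply Rmult_le_compat; try apply Rabs_pos; [apply HK1 | exact Hyz].
Qed.

End Truncation.

Lemma hubble_local_solution a L : phi0 < a -> 1 < L ->
  exists d g, 0 < d /\ g a = L /\
    (forall x, Rabs (x - a) < d -> is_derive g x (hubble_field v x (g x))) /\
    (forall x, Rabs (x - a) <= d -> 1 < g x).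
Proof.
  intros Ha HL.
  set (r := (L - 1) / 2). set (dl := (a - phi0) / 2).
  assert (Hr : 0 < r) by (unfold r; lra). assert (Hdl : 0 < dl) by (unfold dl; lra).
  set (F := truncated_field (L - r) (L + r) (a - dl) (a + dl)).
  destruct (truncated_field_bounded (L - r) (L + r) (a - dl) (a + dl)) as [M HM];
    try (unfold r, dl in *; lra).
  destruct (truncated_field_lipschitz (L - r) (L + r) (a - dl) (a + dl)) as [K HK];
    try (unfold r, dl in *; lra).
  fold F in HM, HK.
  pose proof (lipschitz_const_ge0 _ K (HK 0)) as HK0.
  assert (HM0 : 0 <= M) by (eapply Rle_trans; [apply Rabs_pos | apply (HM 0 0)]).
  destruct (small_radius_exists M K r dl HM0 HK0 Hr Hdl) as (d & Hd & Hd_dl & HMd & HKd).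
  destruct (picard_local_existence F a L M K d) as (g & Hg0 & Hgder & Hgnear); try easy.
  { intros y t. apply truncated_field_continuous; unfold r, dl in *; lra. }
  assert (Hrange : forall x, Rabs (x - a) <= d -> L - r <= g x <= L + r).
  { intros x Hx. pose proof (Hgnear x).
    assert (M * Rabs (x - a) <= M * d) by (apply Rmult_le_compat_l; lra).
    apply Rabs_le_between'. lra. }
  exists d, g. split; [exact Hd |]. split; [exact Hg0 |]. split.
  - intros x Hx. rewrite <- (truncated_field_eq (L - r) (L + r) (a - dl) (a + dl)).
    + now apply Hgder.
    + apply Rabs_le_between'. lra.
    + apply Hrange. lra.
  - intros x Hx. pose proof (Hrange x Hx). unfold r in *. lra.
Qed.

Lemma hubble_field_lt x y : phi0 <= x -> 1 <= y -> hubble_field v x y < y.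
Proof.
  intros Hx Hy. unfold hubble_field.
  pose proof (sqrt_sq1_lt y Hy). pose proof (frakv_pos x Hx). nra.
Qed.

Section Solution.
Variables (h0 : R) (h : R -> R) (Tf : R).
Hypothesis h_sol : is_sol v phi0 h0 h (Finite Tf).

Let Tf_gt : phi0 < Tf.
Proof. now destruct h_sol. Qed.

Let h_gt1 x : phi0 <= x < Tf -> 1 < h x.
Proof. intros Hx. destruct h_sol as (_ & _ & _ & Hgt & _). apply Hgt; simpl; lra. Qed.

Let h_derive x : phi0 < x < Tf -> is_derive h x (hubble_field v x (h x)).
Proof. intros Hx. destruct h_sol as (_ & _ & _ & _ & Hder). apply Hder; simpl; lra. Qed.

Lemma solution_left_limit : exists L, 1 <= L /\ filterlim h (at_left Tf) (locally L).
Proof.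
  set (w := fun x => h x * exp (- x)).
  assert (Hw : forall x y, phi0 < x -> x <= y -> y < Tf -> w y <= w x).
  { intros x y Hx Hxy Hy. destruct (Req_dec x y) as [-> | Hne]; [lra |].
    enough (- w x < - w y) by lra.
    apply (incr_function (fun t => - w t) phi0 Tf
             (fun t => (h t - hubble_field v t (h t)) * exp (- t))); simpl; try lra.
    - intros t Ht1 Ht2. pose proof (h_derive t ltac:(lra)) as Hd.
      unfold w. auto_derive; [eexists; exact Hd |].
      change (Derive (fun x => h x) t) with (Derive h t).
      rewrite (is_derive_unique h t _ Hd). ring.
    - intros t Ht1 Ht2. apply Rmult_lt_0_compat; [| apply exp_pos].
      pose proof (hubble_field_lt t (h t) ltac:(lra) ltac:(pose proof (h_gt1 t); lra)). lra. }
  destruct (nonincreasing_left_limit w phi0 Tf 0 Tf_gt Hw) as [l Hl].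
  { intros x Hx. pose proof (h_gt1 x ltac:(lra)). pose proof (exp_pos (- x)). unfold w. nra. }
  assert (Hh : filterlim h (at_left Tf) (locally (l * exp Tf))).
  { apply filterlim_ext with (fun x => w x * exp x).
    - intros x. unfold w. rewrite Rmult_assoc, <- exp_plus, Rplus_opp_l, exp_0. ring.
    - apply filterlim_Rmult; [exact Hl |]. apply continuous_at_left, continuous_exp. }
  exists (l * exp Tf). split; [| exact Hh].
  apply (filterlim_le (F := at_left Tf) (fun _ => 1) h 1 (l * exp Tf));
    [| apply filterlim_const | exact Hh].
  apply filter_imp with (2 := at_left_between _ _ Tf_gt). intros x Hx.
  pose proof (h_gt1 x ltac:(lra)). lra.
Qed.

Lemma solution_slope_at_end L : filterlim h (at_left Tf) (locally L) ->
  filterlim (fun x => (h x - L) / (x - Tf)) (at_left Tf) (locally (hubble_field v Tf L)).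
Proof.
  intros Hh. apply filterlim_slope_at_left with (df := fun x => hubble_field v x (h x)).
  - apply filter_imp with (2 := at_left_between _ _ Tf_gt). intros x Hx. apply h_derive. lra.
  - exact Hh.
  - apply filterlim_Rminus.
    + apply (filterlim_comp _ _ _ h (fun y => sqrt (y ^ 2 - 1)) _ (locally L) _ Hh).
      apply continuous_sqrt_sq1.
    + apply filterlim_Rmult; [| exact Hh].
      apply continuous_at_left, frakv_continuous, Tf_gt.
Qed.

Lemma is_sol_extend L d g :
  filterlim h (at_left Tf) (locally L) -> 0 < d -> g Tf = L ->
  (forall x, Rabs (x - Tf) < d -> is_derive g x (hubble_field v x (g x))) ->
  (forall x, Rabs (x - Tf) <= d -> 1 < g x) ->
  is_sol v phi0 h0 (fun x => if Rlt_dec x Tf then h x else g x) (Finite (Tf + d)).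
Proof.
  intros Hh Hd Hg0 Hgder Hg1. set (G := fun x => if Rlt_dec x Tf then h x else g x).
  assert (HGl : forall x, x < Tf -> G x = h x) by (intros x Hx; unfold G; now destruct Rlt_dec).
  assert (HGr : forall x, Tf <= x -> G x = g x)
    by (intros x Hx; unfold G; destruct Rlt_dec; [lra | easy]).
  destruct h_sol as (_ & Hh0 & Hhr & _ & _).
  split; [simpl; lra |]. split; [rewrite HGl; [exact Hh0 | lra] |]. split.
  { apply filterlim_ext_loc with h; [| exact Hhr].
    apply filter_imp with (2 := filter_le_within _ _ (open_lt Tf phi0 Tf_gt)).
    intros x Hx. now rewrite HGl. }
  split.
  - intros x Hx1 Hx2. simpl in Hx2. destruct (Rlt_dec x Tf) as [Hlt | Hge].
    + rewrite HGl by exact Hlt. apply h_gt1. lra.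
    + rewrite HGr by lra. apply Hg1. apply Rabs_le_between'. lra.
  - intros x Hx1 Hx2. simpl in Hx2.
    destruct (Rtotal_order x Tf) as [Hlt | [-> | Hgt]].
    + rewrite HGl by exact Hlt. apply is_derive_ext_loc with h; [| apply h_derive; lra].
      apply filter_imp with (2 := open_lt Tf x Hlt). intros y Hy. now rewrite HGl.
    + rewrite HGr by lra. apply is_derive_glue.
      * rewrite Hg0. now apply solution_slope_at_end.
      * apply Hgder. rewrite Rminus_diag, Rabs_R0. exact Hd.
    + rewrite HGr by lra. apply is_derive_ext_loc with g.
      * apply filter_imp with (2 := open_gt Tf x Hgt). intros y Hy. rewrite HGr; lra.
      * apply Hgder. apply Rabs_lt_between'. lra.
Qed.

End Solution.

End ModifiedHubble.

Theorem proposition3 (v : R -> R) (phi0 h0 : R) (h : R -> R) (T : Rbar) :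
  smooth v ->
  (forall phi, phi0 <= phi -> 0 < v phi /\ 0 < Derive v phi) ->
  1 < h0 ->
  is_maximal_sol v phi0 h0 h T ->
  (* type A: reaches the boundary h = 1 at a finite phi1 > phi0 with slope -frakv *)
  (exists phi1 : R,
     phi0 < phi1 /\ T = Finite phi1 /\
     filterlim h (at_left phi1) (locally 1) /\
     filterlim (fun phi => (h phi - 1) / (phi - phi1)) (at_left phi1)
               (locally (- frakv v phi1)) /\
     - frakv v phi1 < 0)
  \/
  (* type B: exists and stays in R_0 for all phi > phi0 *)
  T = p_infty.
Proof.
  intros Hs Hpos _ [Hsol Hmax].
  destruct T as [Tf | |]; [| now right | now destruct Hsol].
  assert (HTf : phi0 < Tf) by now destruct Hsol.
  destruct (solution_left_limit v phi0 Hs Hpos h0 h Tf Hsol) as [L [HL1 HhL]].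
  destruct (Rle_lt_or_eq_dec 1 L HL1) as [HL | <-].
  - exfalso.
    destruct (hubble_local_solution v phi0 Hs Hpos Tf L HTf HL) as (d & g & Hd & Hg0 & Hgder & Hg1).
    apply (Hmax (Finite (Tf + d)) (fun x => if Rlt_dec x Tf then h x else g x)).
    + simpl. lra.
    + intros x _ Hx. simpl in Hx. now destruct Rlt_dec.
    + now apply is_sol_extend with L.
  - left. exists Tf. do 3 (split; [easy |]).
    pose proof (frakv_pos v phi0 Hs Hpos Tf (Rlt_le _ _ HTf)).
    split; [| lra].
    replace (- frakv v Tf) with (hubble_field v Tf 1)
      by (unfold hubble_field; rewrite pow1, Rminus_diag, sqrt_0; ring).
    now apply (solution_slope_at_end v phi0 Hs Hpos h0 h Tf Hsol).
Qed.
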